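(* Assume $n\ge2$ and $F_\infty\ne0$. Then $F$ has exactly $n-1$ zeros, located as follows. - Exactly $n-2$ of them lie strictly between consecutive singularities of $F$ (the zeros of $g$), one in each such open interval. - The remaining zero lies to the left of the smallest zero of $g$ if $F_\infty>0$, and to the right of the largest zero of $g$ if $F_\infty<0$.
   Context: Data: an integer $N\ge 2$, reals $x_A<x_B$, $R=x_B-x_A$, and bins $i=1,\dots,N$ with widths $\Delta x_i>0$ and centers $x_i$ that tile $[x_A,x_B]$ contiguously in increasing order, so that $x_1-x_A=\Delta x_1/2$, $x_N-x_A=R-\Delta x_N/2$ and $0<x_1-x_A<\dots<x_N-x_A<R$. The counts are $y_i\in\{0,1,2,\dots\}$, $M=\sum_i y_i$, and $n$ is the number of indices with $y_i\ge1$. Write $d_i=x_i-x_A$. Define $$g(a)=\sum_{i=1}^N y_i\frac{d_i}{1+a d_i}$$ for $a\notin\{-1/d_i: y_i\ge 1\}$; these excluded points are the poles of $g$. Define $$F(a)=1+\frac R2\Big(a-\frac{M}{g(a)}\Big)$$ wherever $g(a)$ is finite and nonzero. At poles of $g$, $F$ is extended by continuity as $F(a)=1+aR/2$. The zeros of $g$ are the singularities of $F$. Finally, $$F_\infty=1-\frac{R}{2M}\sum_i \frac{y_i}{d_i}.$$ *)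

From HB Require Import structures.
From mathcomp Require Import all_boot all_order all_algebra.
From mathcomp Require Import reals.
Set Implicit Arguments. Unset Strict Implicit. Unset Printing Implicit Defensive.
Import Order.TTheory GRing.Theory Num.Theory.
Local Open Scope ring_scope.

Section Defs.
Variables (R : realType) (N : nat).
(* d i = x_i - x_A, y i = counts *)
Variables (d : 'I_N -> R) (y : 'I_N -> nat).

Definition Mtot : R := (\sum_(i < N) y i)%N%:R.

Definition nOcc : nat := #|[pred i : 'I_N | 0 < y i]%N|.

Definition gfun (a : R) : R := \sum_(i < N) (y i)%:R * d i / (1 + a * d i).

Definition is_pole (a : R) : bool :=
  [exists i : 'I_N, (0 < y i)%N && (1 + a * d i == 0)].

Definition is_sing (a : R) : Prop := ~ is_pole a /\ gfun a = 0.

(* F, extended by continuity at the poles of g as 1 + a R/2; Rg is the range R = x_B - x_A *)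
Definition Ffun (Rg : R) (a : R) : R :=
  if is_pole a then 1 + a * Rg / 2
  else 1 + Rg / 2 * (a - Mtot / gfun a).

Definition is_zeroF (Rg : R) (a : R) : Prop := ~ is_sing a /\ Ffun Rg a = 0.

Definition Finf (Rg : R) : R := 1 - Rg / (2 * Mtot) * \sum_(i < N) (y i)%:R / d i.

End Defs.

From HB Require Import structures.
From mathcomp Require Import all_boot all_order all_algebra.
From mathcomp Require Import reals polyrcf.
From mathcomp Require Import zify ring lra.
Import Order.TTheory GRing.Theory Num.Theory.
Local Open Scope ring_scope.

(* Let i_0 < ... < i_(n-1) be the occupied bins.  Since the d_i are positive and
   increasing, the poles p_k = -1/d_(i_k) of g are increasing, and with the
   weights w_k = y_(i_k) > 0 we get g(a) = sum_k w_k / (a - p_k).  Clearing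
   denominators by PP = prod_k (X - p_k), with cofactors PPk k = PP / (X - p_k):
   - g = Qg / PP where Qg = sum_k w_k PPk k, so the singularities of F are the
     roots of Qg;
   - F vanishes exactly at the roots of HF = (2/R + X) Qg - M PP
     = sum_k w_k (2/R + p_k) PPk k, of degree n-1 and leading coefficient
     (2M/R) F_oo.
   Qg alternates in sign at the poles, so it has one root z_k in each
   ]p_k, p_(k+1)[ and no other one.  At z_k we have HF = -M PP, which alternates
   in sign because exactly one pole separates z_k from z_(k+1); one more sign
   change of HF occurs between z_0 and a point far to the left when F_oo > 0, or
   between z_(n-2) and a point far to the right when F_oo < 0.  These n-1 sign
   changes give n-1 roots, hence all roots of HF. *)

Section Interlacing.
Set Implicit Arguments. Unset Strict Implicit.
Variable R : realDomainType.
Implicit Types (x : nat -> R) (rs : seq R).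

Definition interlaces x rs := forall k, (k < size rs)%N -> x k < rs`_k < x k.+1.

Lemma interlaces_le x rs i j :
  interlaces x rs -> (i <= j <= size rs)%N -> x i <= x j.
Proof.
move=> hx /andP[]; elim: j => [|j IH] ij js; first by move: ij; rewrite leqn0 => /eqP ->.
move: ij; rewrite leq_eqVlt ltnS => /orP[/eqP -> //|ij].
have /andP[h1 h2] := hx j js.
exact: le_trans (IH ij (ltnW js)) (ltW (lt_trans h1 h2)).
Qed.

Lemma interlaces_sorted x rs : interlaces x rs -> sorted <%R rs.
Proof.
move=> hx; apply/(sortedP 0) => k hk.
have /andP[_ h1] := hx k (ltnW hk); have /andP[h2 _] := hx k.+1 hk.
exact: lt_trans h1 h2.
Qed.

Lemma interlaces_uniq x rs : interlaces x rs -> uniq rs.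
Proof. by move/interlaces_sorted; apply: sorted_uniq; [apply: lt_trans|apply: ltxx]. Qed.

Lemma interlaces_unique x rs k a : interlaces x rs -> a \in rs ->
  (k < size rs)%N -> x k < a < x k.+1 -> a = rs`_k.
Proof.
move=> hx /(nthP 0)[j hj <-] hk /andP[a1 a2]; have /andP[b1 b2] := hx j hj.
case: (ltngtP j k) => [jk|kj|-> //].
  have h : x j.+1 <= x k by apply: (interlaces_le hx); rewrite jk ltnW.
  by move: (lt_trans b2 (le_lt_trans h a1)); rewrite ltxx.
have h : x k.+1 <= x j by apply: (interlaces_le hx); rewrite kj ltnW.
by move: (lt_trans a2 (le_lt_trans h b1)); rewrite ltxx.
Qed.

Lemma interlaces_exists_unique x rs (S : R -> Prop) k :
  interlaces x rs -> (forall a, S a <-> a \in rs) -> (k < size rs)%N ->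
  exists! a, S a /\ x k < a < x k.+1.
Proof.
move=> hx hS hk; exists rs`_k; split; first by split; [apply/hS/mem_nth | exact: hx].
by move=> a [/hS ars ak]; rewrite (interlaces_unique hx ars hk ak).
Qed.

Lemma interlaces_gaps x rs zs (S : R -> Prop) s :
  interlaces x rs -> (forall a, S a <-> a \in rs) ->
  (forall k, (k < size zs)%N -> zs`_k = x (s + k)%N) ->
  (s + size zs <= (size rs).+1)%N ->
  forall k, (k.+1 < size zs)%N -> exists! a, S a /\ zs`_k < a < zs`_k.+1.
Proof.
move=> hx hS x_zs size_zs k hk.
rewrite (x_zs k (ltnW hk)) (x_zs k.+1 hk) addnS.
by apply: interlaces_exists_unique hx hS _; lia.
Qed.

End Interlacing.

Lemma sign_changes_roots (R : rcfType) (P : {poly R}) (m : nat) (x : nat -> R) :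
  (0 < m)%N -> (size P <= m.+1)%N ->
  (forall k, (k < m)%N -> x k < x k.+1) ->
  (forall k, (k < m)%N -> P.[x k] * P.[x k.+1] < 0) ->
  exists2 rs, interlaces x rs /\ size rs = m & forall a, root P a <-> a \in rs.
Proof.
move=> m_gt0 sizeP x_inc sign_change.
have ivt k : exists z, (k < m)%N ==> (x k < z < x k.+1) && root P z.
  case: (ltnP k m) => [km|]; last by exists 0.
  have [z] := poly_ivtoo (ltW (x_inc k km)) (sign_change k km).
  by rewrite in_itv /= => hz rz; exists z; rewrite hz rz.
pose rs := mkseq (fun k => xchoose (ivt k)) m.
have rsP k : (k < m)%N -> (x k < rs`_k < x k.+1) && root P rs`_k.
  by move=> km; rewrite nth_mkseq //; move/implyP: (xchooseP (ivt k)); apply.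
have rs_interlaces : interlaces x rs by move=> k; rewrite size_mkseq => /rsP/andP[].
have rs_roots : all (root P) rs.
  by apply/allP => z /(nthP 0)[k]; rewrite size_mkseq => /rsP/andP[_ rk] <-.
have P_neq0 : P != 0.
  by apply: contraTneq (sign_change 0%N m_gt0) => ->; rewrite !horner0 mul0r ltxx.
exists rs; first by rewrite size_mkseq.
move=> a; split => [Pa|/(allP rs_roots) //]; apply/negPn/negP => a_rs.
have := max_poly_roots P_neq0 (rs := a :: rs).
rewrite /= Pa rs_roots a_rs (interlaces_uniq rs_interlaces).
by rewrite size_mkseq => /(_ isT isT); rewrite ltnNge sizeP.
Qed.

Lemma far_left_sign (R : rcfType) (P : {poly R}) (b : R) : P != 0 ->
  exists2 t, t < b & Num.sg P.[t] = sgp_minfty P.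
Proof.
move=> P_neq0; exists (Num.min (- cauchy_bound P) (b - 1)).
  by rewrite gt_min ltrBlDr ltrDl ltr01 orbT.
by apply: (sgp_minftyP (le_cauchy_bound P_neq0)); rewrite in_itv /= ge_min lexx.
Qed.

Lemma far_right_sign (R : rcfType) (P : {poly R}) (b : R) : P != 0 ->
  exists2 t, b < t & Num.sg P.[t] = sgp_pinfty P.
Proof.
move=> P_neq0; exists (Num.max (cauchy_bound P) (b + 1)).
  by rewrite lt_max ltrDl ltr01 orbT.
by apply: (sgp_pinftyP (ge_cauchy_bound P_neq0)); rewrite in_itv /= le_max lexx.
Qed.

Lemma prod_same_side (R : realDomainType) (I : finType) (J : pred I)
    (p : I -> R) (a b : R) :
  a <= b -> (forall j, J j -> p j < a \/ b < p j) ->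
  0 < (\prod_(j | J j) (a - p j)) * \prod_(j | J j) (b - p j).
Proof.
move=> ab hJ; rewrite -big_split /=; apply: prodr_gt0 => j /hJ [h|h].
  by rewrite mulr_gt0 // subr_gt0 // (lt_le_trans h ab).
by rewrite -mulrNN mulr_gt0 // oppr_gt0 subr_lt0 // (le_lt_trans ab h).
Qed.

Lemma mul_neg_neg (R : realDomainType) (h q r : R) :
  h * q < 0 -> q * r < 0 -> 0 < h * r.
Proof.
move=> hq qr.
have q_neq0 : q != 0 by apply: contraTneq hq => ->; rewrite mulr0 ltxx.
have := nmulr_lgt0 (h * q) qr; rewrite hq.
have -> : h * q * (q * r) = h * r * (q * q) by ring.
by rewrite pmulr_lgt0 // lt0r mulf_neq0 //= -expr2 sqr_ge0.
Qed.

Section Model.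
Set Implicit Arguments. Unset Strict Implicit.
Variables (R : rcfType) (n : nat) (p w : nat -> R) (Rg : R).
Hypothesis n_gt1 : (1 < n)%N.
Hypothesis p_inc : forall i j, (i < j)%N -> (j < n)%N -> p i < p j.
Hypothesis w_pos : forall k, (k < n)%N -> 0 < w k.
Hypothesis Rg_pos : 0 < Rg.

(* g, its poles, M, F and F_infty, written in terms of the n poles p k of g
   (in increasing order) and the positive weights w k attached to them. *)
Definition mass : R := \sum_(k < n) w k.
Definition gw (a : R) : R := \sum_(k < n) w k / (a - p k).
Definition polew (a : R) : bool := [exists k : 'I_n, a == p k].
Definition Fw (a : R) : R :=
  if polew a then 1 + a * Rg / 2 else 1 + Rg / 2 * (a - mass / gw a).
Definition Finfw : R := 1 + Rg / (2 * mass) * \sum_(k < n) w k * p k.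

(* Clearing denominators: g = Qg / PP, and F vanishes exactly where
   HF = (2/Rg + X) Qg - mass PP does (lemma HF_eq below). *)
Definition PP : {poly R} := \prod_(j < n) ('X - (p j)%:P).
Definition PPk (k : nat) : {poly R} := \prod_(j < n | (j : nat) != k) ('X - (p j)%:P).
Definition Qg : {poly R} := \sum_(k < n) w k *: PPk k.
Definition HF : {poly R} := \sum_(k < n) (w k * (2 / Rg + p k)) *: PPk k.

Lemma p_le i j : (i <= j)%N -> (j < n)%N -> p i <= p j.
Proof.
rewrite leq_eqVlt => /orP[/eqP -> //|ij jn].
by rewrite ltW // p_inc.
Qed.

Lemma p_inj i j : (i < n)%N -> (j < n)%N -> p i = p j -> i = j.
Proof.
move=> hi hj e; case: (ltngtP i j) => // h;
  [have := p_inc h hj | have := p_inc h hi]; by rewrite e ltxx.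
Qed.

Lemma mass_gt0 : 0 < mass.
Proof.
have n_gt0 : (0 < n)%N by apply: ltnW.
rewrite /mass (bigD1 (Ordinal n_gt0)) //= ltr_pwDl ?w_pos //.
by apply: sumr_ge0 => j _; apply/ltW/w_pos.
Qed.

Lemma polewP a : reflect (exists2 k, (k < n)%N & a = p k) (polew a).
Proof.
apply: (iffP existsP) => [[k /eqP e]|[k hk e]]; first by exists k.
by exists (Ordinal hk); rewrite e.
Qed.

Lemma PP_factor k : (k < n)%N -> PP = ('X - (p k)%:P) * PPk k.
Proof. by move=> hk; rewrite /PP (bigD1 (Ordinal hk)). Qed.

Lemma PP_eq0 a : (PP.[a] == 0) = polew a.
Proof.
rewrite /PP horner_prod; apply/prodf_eq0/existsP => [[j _]|[j /eqP ->]].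
  by rewrite hornerXsubC subr_eq0 => ?; exists j.
by exists j => //; rewrite hornerXsubC subrr.
Qed.

Lemma PPk_self_neq0 k : (k < n)%N -> (PPk k).[p k] != 0.
Proof.
move=> hk; rewrite /PPk horner_prod; apply/prodf_neq0 => j jk.
rewrite hornerXsubC subr_eq0; apply: contra jk => /eqP e.
by rewrite (p_inj hk (ltn_ord j) e).
Qed.

Lemma PPk_other k j : (k < n)%N -> j != k -> (PPk j).[p k] = 0.
Proof.
move=> hk jk; rewrite /PPk horner_prod (bigD1 (Ordinal hk)) 1?eq_sym //=.
by rewrite hornerXsubC subrr mul0r.
Qed.

Lemma Qg_pole k : (k < n)%N -> Qg.[p k] = w k * (PPk k).[p k].
Proof.
move=> hk; rewrite /Qg horner_sum (bigD1 (Ordinal hk)) //= hornerZ big1 ?addr0 //.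
by move=> j jk; rewrite hornerZ PPk_other ?mulr0.
Qed.

Lemma Qg_off_pole a : ~~ polew a -> Qg.[a] = gw a * PP.[a].
Proof.
move=> np; rewrite /Qg /gw horner_sum mulr_suml; apply: eq_bigr => k _.
have ak : a - p k != 0.
  by rewrite subr_eq0; apply: contraNneq np => ->; apply/polewP; exists k.
by rewrite hornerZ (PP_factor (ltn_ord k)) hornerM hornerXsubC; field.
Qed.

Lemma HF_eq : HF = ((2 / Rg)%:P + 'X) * Qg - mass *: PP.
Proof.
rewrite /HF /Qg /mass mulr_sumr scaler_suml -sumrB; apply: eq_bigr => k _.
rewrite (PP_factor (ltn_ord k)) -!mul_polyC polyCM polyCD; ring.
Qed.

Lemma HF_horner a : HF.[a] = (2 / Rg + a) * Qg.[a] - mass * PP.[a].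
Proof. by rewrite HF_eq !hornerE. Qed.

Lemma sing_iff a : ~ polew a /\ gw a = 0 <-> root Qg a.
Proof.
case: (polewP a) => [[k hk ->]|np].
  split=> [[np _]|]; first by case: np.
  by rewrite /root Qg_pole // mulf_eq0 (gt_eqF (w_pos hk)) (negbTE (PPk_self_neq0 hk)).
have npb : ~~ polew a by apply/polewP.
rewrite /root Qg_off_pole // mulf_eq0 PP_eq0 (negbTE npb) orbF.
by split=> [[_ ->]|/eqP].
Qed.

Lemma zero_iff a : ~ (~ polew a /\ gw a = 0) /\ Fw a = 0 <-> root HF a.
Proof.
have Rg_neq0 : Rg != 0 by rewrite gt_eqF.
rewrite /root HF_horner /Fw.
case: (polewP a) => [[k hk ->]|np].
  have /eqP -> : PP.[p k] == 0 by rewrite PP_eq0; apply/polewP; exists k.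
  rewrite Qg_pole // mulr0 subr0 !mulf_eq0 (gt_eqF (w_pos hk)).
  rewrite (negbTE (PPk_self_neq0 hk)) !orbF.
  have -> : 1 + p k * Rg / 2 = Rg / 2 * (2 / Rg + p k) by field.
  have Rg2_neq0 : Rg / 2 != 0 by rewrite mulf_neq0 ?invr_eq0 ?pnatr_eq0.
  split=> [[_ /eqP]|/eqP ->]; first by rewrite mulf_eq0 (negbTE Rg2_neq0).
  by split=> [[]|]; rewrite ?mulr0.
have npb : ~~ polew a by apply/polewP.
have PPa : PP.[a] != 0 by rewrite PP_eq0.
rewrite Qg_off_pole //.
case: (eqVneq (gw a) 0) => [g0|g_neq0].
  rewrite g0 mul0r mulr0 sub0r oppr_eq0 mulf_eq0 (gt_eqF mass_gt0) (negbTE PPa).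
  by split=> // -[[]].
have -> : (2 / Rg + a) * (gw a * PP.[a]) - mass * PP.[a]
    = (2 * gw a / Rg) * (1 + Rg / 2 * (a - mass / gw a)) * PP.[a].
  by field; rewrite g_neq0 Rg_neq0.
have c_neq0 : 2 * gw a / Rg != 0 by rewrite !mulf_neq0 ?invr_eq0 ?pnatr_eq0.
rewrite mulf_eq0 (negbTE PPa) orbF mulf_eq0 (negbTE c_neq0) /=.
by split=> [[_ /eqP]|/eqP ->] //; split=> // -[_ g0]; move: g_neq0; rewrite g0 eqxx.
Qed.

Lemma PPk_split k i a : (i < n)%N -> i != k ->
  (PPk k).[a] = (a - p i) * \prod_(j < n | ((j : nat) != k) && ((j : nat) != i)) (a - p j).
Proof.
move=> hi ik; rewrite /PPk horner_prod (bigD1 (Ordinal hi)) //= hornerXsubC.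
by congr (_ * _); apply: eq_bigr => j _; rewrite hornerXsubC.
Qed.

Lemma Qg_sign_change k : (k.+1 < n)%N -> Qg.[p k] * Qg.[p k.+1] < 0.
Proof.
move=> hk1; have hk : (k < n)%N by apply: ltnW.
have kk1 : k != k.+1 by rewrite neq_ltn ltnSn.
rewrite !Qg_pole // (@PPk_split k k.+1 _ hk1) 1?eq_sym // (@PPk_split k.+1 k _ hk) //.
under eq_bigl => j do rewrite andbC.
set A := \prod_(j < n | _) (p k - p j); set B := \prod_(j < n | _) (p k.+1 - p j).
have AB : 0 < A * B.
  apply: prod_same_side => [|j /andP[jk1 jk]]; first exact: ltW (p_inc (ltnSn k) hk1).
  case: (ltngtP j k) => [jk'|kj|/eqP]; last by rewrite (negbTE jk).
    by left; apply: p_inc.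
  by right; apply: p_inc (ltn_ord j); rewrite ltn_neqAle eq_sym jk1.
have -> : w k * ((p k - p k.+1) * A) * (w k.+1 * ((p k.+1 - p k) * B))
    = - (w k * w k.+1 * (p k.+1 - p k) ^+ 2) * (A * B) by ring.
by rewrite pmulr_llt0 // oppr_lt0 !mulr_gt0 ?w_pos // subr_gt0 p_inc.
Qed.

Lemma PP_sign_change i a b : (i < n)%N -> a < p i < b ->
  ((0 < i)%N -> p i.-1 < a) -> ((i.+1 < n)%N -> b < p i.+1) -> PP.[a] * PP.[b] < 0.
Proof.
move=> hi /andP[ai ib] left_i right_i.
have across : (a - p i) * (b - p i) < 0 by rewrite pmulr_llt0 ?subr_gt0 // subr_lt0.
have others : 0 < (PPk i).[a] * (PPk i).[b].
  rewrite /PPk !horner_prod; under eq_bigr => j do rewrite hornerXsubC.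
  under [X in _ * X]eq_bigr => j do rewrite hornerXsubC.
  apply: prod_same_side => [|j ji]; first exact/ltW/(lt_trans ai ib).
  case: (ltngtP j i) ji => // [ji _|ij _]; [left|right].
    by apply: le_lt_trans (left_i _); [apply: p_le | case: (i) ji]; lia.
  by apply: lt_le_trans (right_i _) _; [apply: leq_ltn_trans ij _|apply: p_le].
by rewrite (PP_factor hi) !hornerM !hornerXsubC mulrACA pmulr_llt0.
Qed.

Lemma HF_at_sing z : root Qg z -> HF.[z] = - (mass * PP.[z]).
Proof. by move=> /eqP Qz; rewrite HF_horner Qz mulr0 sub0r. Qed.

Lemma size_PP : size PP = n.+1.
Proof. by rewrite /PP size_prod_XsubC /index_enum -enumT size_enum_ord. Qed.

Lemma size_PPk k : (k < n)%N -> size (PPk k) = n.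
Proof.
move=> hk; have := size_PP; rewrite (PP_factor hk) size_monicM ?monicXsubC //.
  by rewrite size_XsubC => -[].
by rewrite monic_neq0 ?monic_prod_XsubC.
Qed.

Lemma cofactor_comb (c : nat -> R) :
  (size (\sum_(k < n) c k *: PPk k)%R <= n)%N /\
  (\sum_(k < n) c k *: PPk k)`_n.-1 = \sum_(k < n) c k.
Proof.
split.
  apply: (big_ind (fun q : {poly R} => (size q <= n)%N)) => [|q r hq hr|k _].
  - by rewrite size_poly0.
  - by apply: leq_trans (size_polyD _ _) _; rewrite geq_max hq hr.
  - by apply: leq_trans (size_scale_leq _ _) _; rewrite size_PPk.
rewrite coef_sum; apply: eq_bigr => k _; rewrite coefZ.
have /monicP := monic_prod_XsubC (index_enum 'I_n) (fun j : 'I_n => (j : nat) != k) p.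
by rewrite -/(PPk k) lead_coefE size_PPk // => ->; rewrite mulr1.
Qed.

Lemma size_Qg : (size Qg <= n)%N.
Proof. exact: (cofactor_comb w).1. Qed.

Lemma size_HF : (size HF <= n)%N.
Proof. exact: (cofactor_comb (fun k => w k * (2 / Rg + p k))).1. Qed.

Lemma HF_lead : Finfw != 0 ->
  size HF = n /\ lead_coef HF = 2 * mass / Rg * Finfw.
Proof.
move=> Finf_neq0.
have Rg_neq0 : Rg != 0 by rewrite gt_eqF.
have mass_neq0 : mass != 0 by rewrite gt_eqF ?mass_gt0.
have [_ coef_top] := cofactor_comb (fun k => w k * (2 / Rg + p k)).
have top : HF`_n.-1 = 2 * mass / Rg * Finfw.
  rewrite coef_top (_ : \sum_(k < n) _ = 2 / Rg * mass + \sum_(k < n) w k * p k).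
    by rewrite /Finfw; field; rewrite mass_neq0 Rg_neq0.
  by rewrite /mass mulr_sumr -big_split; apply: eq_bigr => k _ /=; ring.
have top_neq0 : HF`_n.-1 != 0 by rewrite top !mulf_neq0 ?invr_eq0 ?pnatr_eq0.
have size_HF_eq : size HF = n.
  apply/eqP; rewrite eqn_leq size_HF -(prednK (ltnW n_gt1)) ltnNge.
  by apply: contra top_neq0 => /(nth_default 0) ->.
by rewrite lead_coefE size_HF_eq top.
Qed.

Lemma HF_PP_far_left : 0 < Finfw -> exists2 t, t < p 0 & HF.[t] * PP.[t] < 0.
Proof.
move=> Finf_gt0; have [HF_size lc_HF] := HF_lead (lt0r_neq0 Finf_gt0).
have PP_monic : PP \is monic by apply: monic_prod_XsubC.
have HF_neq0 : HF != 0 by rewrite -size_poly_gt0 HF_size ltnW.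
have S_neq0 : HF * PP != 0 by rewrite mulf_neq0 // monic_neq0.
have [t t_left sg_t] := far_left_sign (p 0) S_neq0.
exists t => //; rewrite -hornerM -sgr_cp0 sg_t.
rewrite /sgp_minfty size_Mmonic // lead_coef_Mmonic // HF_size size_PP lc_HF.
have -> : ((n + n.+1).-1.-1 = (n.-1).*2.+1)%N by clear -n_gt1; lia.
rewrite -signr_odd /= odd_double expr1 mulN1r sgrN gtr0_sg //.
by rewrite !mulr_gt0 ?mass_gt0 ?invr_gt0.
Qed.

Lemma HF_PP_far_right : Finfw < 0 -> exists2 t, p n.-1 < t & HF.[t] * PP.[t] < 0.
Proof.
move=> Finf_lt0; have [HF_size lc_HF] := HF_lead (ltr0_neq0 Finf_lt0).
have PP_monic : PP \is monic by apply: monic_prod_XsubC.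
have HF_neq0 : HF != 0 by rewrite -size_poly_gt0 HF_size ltnW.
have S_neq0 : HF * PP != 0 by rewrite mulf_neq0 // monic_neq0.
have [t t_right sg_t] := far_right_sign (p n.-1) S_neq0.
exists t => //; rewrite -hornerM -sgr_cp0 sg_t /sgp_pinfty lead_coef_Mmonic // lc_HF.
by rewrite ltr0_sg // pmulr_rlt0 // !mulr_gt0 ?mass_gt0 ?invr_gt0.
Qed.

Lemma HF_sign_change_sing z1 z2 : root Qg z1 -> root Qg z2 ->
  PP.[z1] * PP.[z2] < 0 -> HF.[z1] * HF.[z2] < 0.
Proof.
move=> Qz1 Qz2 PPz; rewrite (HF_at_sing Qz1) (HF_at_sing Qz2) mulrNN mulrACA.
by rewrite pmulr_rlt0 // mulr_gt0 ?mass_gt0.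
Qed.

Lemma HF_sign_change_far t z : root Qg z ->
  HF.[t] * PP.[t] < 0 -> PP.[t] * PP.[z] < 0 -> HF.[t] * HF.[z] < 0.
Proof.
move=> Qz HPt PPtz; rewrite (HF_at_sing Qz) mulrN oppr_lt0 mulrCA.
by rewrite mulr_gt0 ?mass_gt0 // (mul_neg_neg HPt PPtz).
Qed.

Lemma Qg_roots :
  exists2 zs, interlaces p zs /\ size zs = n.-1 & forall a, root Qg a <-> a \in zs.
Proof.
apply: sign_changes_roots => [|||k hk].
- by rewrite -ltnS prednK // ltnW.
- by rewrite prednK ?(ltnW n_gt1) //; exact: size_Qg.
- by move=> k hk; apply: p_inc; rewrite // -ltn_predRL.
- by apply: Qg_sign_change; rewrite -ltn_predRL.
Qed.

Section Singularities.
Variable zs : seq R.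
Hypothesis zs_int : interlaces p zs.
Hypothesis zs_size : size zs = n.-1.
Hypothesis zs_roots : forall a, root Qg a <-> a \in zs.

Lemma zs_sing k : (k < n.-1)%N -> root Qg zs`_k.
Proof. by move=> hk; apply/zs_roots/mem_nth; rewrite zs_size. Qed.

Lemma zs_between k : (k < n.-1)%N -> p k < zs`_k < p k.+1.
Proof. by move=> hk; apply: zs_int; rewrite zs_size. Qed.

Lemma zs_inc k : (k.+1 < n.-1)%N -> zs`_k < zs`_k.+1.
Proof.
move=> hk; have /andP[_ zk] := zs_between (ltnW hk).
by have /andP[zk1 _] := zs_between hk; apply: lt_trans zk zk1.
Qed.

Lemma HF_zs_sign_change k : (k.+1 < n.-1)%N -> HF.[zs`_k] * HF.[zs`_k.+1] < 0.
Proof.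
move=> hk; have hk' : (k < n.-1)%N by apply: ltnW.
apply: HF_sign_change_sing (zs_sing hk') (zs_sing hk) _.
have /andP[pk zk] := zs_between hk'; have /andP[zk1 pk2] := zs_between hk.
by apply: (PP_sign_change (i := k.+1)); rewrite ?zk ?zk1 //; rewrite -ltn_predRL.
Qed.

Definition zeros_layout (x : nat -> R) (s : nat) (zF : seq R) : Prop :=
  [/\ interlaces x zF, size zF = n.-1, forall a, root HF a <-> a \in zF
    & forall k, (k < size zs)%N -> zs`_k = x (s + k)%N].

Lemma zeros_left : 0 < Finfw ->
  exists x zF, zeros_layout x 1 zF /\ exists a, root HF a /\ a < head 0 zs.
Proof.
move=> Finf_gt0; have [t t_left HPt] := HF_PP_far_left Finf_gt0.
have n1_gt0 : (0 < n.-1)%N by rewrite -ltnS prednK // ltnW.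
have /andP[p0z0 z0p1] := zs_between n1_gt0.
pose x k := (t :: zs)`_k.
have [zF [zF_int zF_size] zF_roots] : exists2 zF, interlaces x zF /\ size zF = n.-1
    & forall a, root HF a <-> a \in zF.
  apply: sign_changes_roots => // [|[|k] hk|[|k] hk].
  - by rewrite prednK ?(ltnW n_gt1) //; exact: size_HF.
  - exact: lt_trans t_left p0z0.
  - exact: zs_inc.
  - apply: HF_sign_change_far (zs_sing n1_gt0) HPt _.
    by apply: (PP_sign_change (i := 0)); rewrite ?t_left ?p0z0 // ltnW.
  - exact: HF_zs_sign_change.
exists x, zF; split; first by split=> // k _; rewrite add1n.
exists zF`_0; split; first by apply/zF_roots/mem_nth; rewrite zF_size.
have /andP[_ zF0] : x 0 < zF`_0 < x 1 by apply: zF_int; rewrite zF_size.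
by rewrite -nth0; exact: zF0.
Qed.

Lemma zeros_right : Finfw < 0 ->
  exists x zF, zeros_layout x 0 zF /\ exists a, root HF a /\ last 0 zs < a.
Proof.
move=> Finf_lt0; have [t t_right HPt] := HF_PP_far_right Finf_lt0.
have n2_lt : (n.-2 < n.-1)%N by case: (n) n_gt1 => [|[|m]].
have /andP[pz zp] := zs_between n2_lt.
have n2S : n.-2.+1 = n.-1 by case: (n) n_gt1 => [|[|m]].
have zp' : zs`_n.-2 < p n.-1 by rewrite -n2S.
pose x k := (rcons zs t)`_k.
have x_zs k : (k < n.-1)%N -> x k = zs`_k.
  by move=> hk; rewrite /x nth_rcons zs_size hk.
have x_t : x n.-1 = t by rewrite /x nth_rcons zs_size ltnn eqxx.
have [zF [zF_int zF_size] zF_roots] : exists2 zF, interlaces x zF /\ size zF = n.-1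
    & forall a, root HF a <-> a \in zF.
  apply: sign_changes_roots => // [||k hk|k hk].
  - by rewrite -ltnS prednK // ltnW.
  - by rewrite prednK ?(ltnW n_gt1) //; exact: size_HF.
  - rewrite x_zs ?(ltnW hk) //; case: (ltnP k.+1 n.-1) => [hk1|nk].
      by rewrite x_zs //; apply: zs_inc.
    have -> : k = n.-2 by clear -hk nk; lia.
    by rewrite n2S x_t (lt_trans zp' t_right).
  - rewrite x_zs ?(ltnW hk) //; case: (ltnP k.+1 n.-1) => [hk1|nk].
      by rewrite x_zs //; apply: HF_zs_sign_change.
    have -> : k = n.-2 by clear -hk nk; lia.
    rewrite n2S x_t mulrC; apply: HF_sign_change_far (zs_sing n2_lt) HPt _.
    rewrite mulrC; apply: (PP_sign_change (i := n.-1)); rewrite ?zp' ?t_right //.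
    + by rewrite prednK // ltnW.
    + by rewrite prednK ?ltnn // ltnW.
exists x, zF; split; first by split=> // k; rewrite add0n zs_size => /x_zs.
exists zF`_n.-2; split; first by apply/zF_roots/mem_nth; rewrite zF_size.
have /andP[zF_last _] : x n.-2 < zF`_n.-2 < x n.-2.+1.
  by apply: zF_int; rewrite zF_size.
by rewrite -(nth_last 0) zs_size -x_zs.
Qed.

End Singularities.

Theorem model_zeros (S Z : R -> Prop) :
  (forall a, S a <-> root Qg a) -> (forall a, Z a <-> root HF a) -> Finfw != 0 ->
  exists zs zF : seq R,
    sorted <%R zs /\ (forall a, S a <-> a \in zs) /\
    uniq zF /\ size zF = n.-1 /\ (forall a, Z a <-> a \in zF) /\
    size zs = n.-1 /\
    (forall k, (k.+1 < size zs)%N -> exists! a, Z a /\ zs`_k < a < zs`_k.+1) /\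
    (0 < Finfw -> exists a, Z a /\ a < head 0 zs) /\
    (Finfw < 0 -> exists a, Z a /\ last 0 zs < a).
Proof.
move=> hS hZ Finf_neq0; have [zs [zs_int zs_size] zs_roots] := Qg_roots.
suff [x [zF [s [[zF_int zF_size zF_roots x_zs] s_le1 zF_ends]]]] : exists x zF s,
    [/\ zeros_layout zs x s zF, (s <= 1)%N
      & (0 < Finfw -> exists a, root HF a /\ a < head 0 zs) /\
        (Finfw < 0 -> exists a, root HF a /\ last 0 zs < a)].
  have zF_Z a : Z a <-> a \in zF by rewrite hZ.
  have Z_end (P : R -> Prop) : (exists a, root HF a /\ P a) -> exists a, Z a /\ P a.
    by case=> a [/hZ Za Pa]; exists a.
  exists zs, zF; split; first exact: interlaces_sorted zs_int.
  split=> [a|]; first by rewrite hS.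
  split; first exact: interlaces_uniq zF_int.
  do 3!split=> //; case: zF_ends => left right.
  split; last by split=> [/left|/right]; apply: Z_end.
  by apply: interlaces_gaps zF_int zF_Z x_zs _; rewrite zF_size zs_size; lia.
case: (ltrgtP Finfw 0) Finf_neq0 => // Finf_sign _.
  have [x [zF [layout right]]] := zeros_right zs_int zs_size zs_roots Finf_sign.
  by exists x, zF, 0%N; split=> //; split=> // /(lt_trans Finf_sign); rewrite ltxx.
have [x [zF [layout left]]] := zeros_left zs_int zs_size zs_roots Finf_sign.
by exists x, zF, 1%N; split=> //; split=> // /(lt_trans Finf_sign); rewrite ltxx.
Qed.

End Model.

Lemma tiling_offsets (R : realType) (N : nat) (xA : R) (dx xc : 'I_N -> R) :
  (forall i, 0 < dx i) ->
  (forall i : 'I_N, xc i - dx i / 2 = xA + \sum_(j < N | (j < i)%N) dx j) ->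
  (forall i, 0 < xc i - xA) /\ (forall i j : 'I_N, (i < j)%N -> xc i - xA < xc j - xA).
Proof.
move=> dx_pos tiling.
have d_eq i : xc i - xA = \sum_(j < N | (j < i)%N) dx j + dx i / 2.
  by have := tiling i => e; rewrite -(subrK (dx i / 2) (xc i)) e; ring.
split=> [i|i j ij].
  rewrite d_eq ltr_wpDl ?divr_gt0 ?ltr0n //.
  by apply: sumr_ge0 => j _; apply/ltW.
rewrite !d_eq.
have up_to_i : \sum_(k < N | (k < i)%N) dx k + dx i <= \sum_(k < N | (k < j)%N) dx k.
  rewrite [X in _ <= X](bigD1 i) //= [X in _ <= X]addrC lerD2r.
  rewrite big_mkcond [X in _ <= X]big_mkcond /=; apply: ler_sum => k _.
  case: ifP => [ki|_]; first by rewrite (ltn_trans ki ij) neq_ltn ki.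
  by case: ifP => // _; apply/ltW.
have := dx_pos i; have := dx_pos j; lra.
Qed.

Section Reduction.
Set Implicit Arguments. Unset Strict Implicit.
Variables (R : realType) (N : nat) (d : 'I_N -> R) (y : 'I_N -> nat) (i0 : 'I_N).
Hypothesis d_pos : forall i, 0 < d i.
Hypothesis d_inc : forall i j : 'I_N, (i < j)%N -> d i < d j.

Definition occ : seq 'I_N := enum [pred i : 'I_N | (0 < y i)%N].
Definition occ_pole (k : nat) : R := - (d (nth i0 occ k))^-1.
Definition occ_weight (k : nat) : R := (y (nth i0 occ k))%:R.

Lemma size_occ : size occ = nOcc y.
Proof. by rewrite /nOcc cardE. Qed.

Lemma occ_inc a b : (a < b)%N -> (b < size occ)%N -> (nth i0 occ a < nth i0 occ b)%N.
Proof.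
move=> ab b_lt.
have occ_sorted : sorted ltn (map val occ).
  rewrite /occ -[enum _](eq_filter (mem_enum _)) -(eq_filter (mem_map val_inj _)).
  by rewrite -filter_map (sorted_filter ltn_trans) // unlock val_ord_enum iota_ltn_sorted.
have := sorted_ltn_nth ltn_trans 0%N occ_sorted a b.
rewrite size_map !inE !(nth_map i0) ?(ltn_trans ab b_lt) //.
by apply; rewrite ?(ltn_trans ab b_lt).
Qed.

Lemma occ_occupied k : (k < size occ)%N -> (0 < y (nth i0 occ k))%N.
Proof. by move=> hk; have := mem_nth i0 hk; rewrite mem_enum. Qed.

Lemma sum_occ (f : 'I_N -> R) : (forall i, y i = 0%N -> f i = 0) ->
  \sum_(i < N) f i = \sum_(k < size occ) f (nth i0 occ k).
Proof.
move=> f0; rewrite (bigID (fun i => (0 < y i)%N)) /= [X in _ + X]big1 ?addr0.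
  by rewrite -big_enum (big_nth i0) big_mkord.
by move=> i; rewrite -eqn0Ngt => /eqP /f0.
Qed.

Lemma occ_pole_inc a b : (a < b)%N -> (b < size occ)%N -> occ_pole a < occ_pole b.
Proof.
by move=> ab b_lt; rewrite /occ_pole ltrN2 ltf_pV2 ?posrE ?d_pos // d_inc // occ_inc.
Qed.

Lemma occ_weight_pos k : (k < size occ)%N -> 0 < occ_weight k.
Proof. by move=> hk; rewrite /occ_weight ltr0n occ_occupied. Qed.

Lemma gfun_occ a : gfun d y a = gw (size occ) occ_pole occ_weight a.
Proof.
rewrite /gfun sum_occ => [|i ->]; last by rewrite !mul0r.
apply: eq_bigr => k _; rewrite /occ_pole /occ_weight opprK -mulrA; congr (_ * _).
have d_neq0 := lt0r_neq0 (d_pos (nth i0 occ k)).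
have -> : a + (d (nth i0 occ k))^-1 = (1 + a * d (nth i0 occ k)) / d (nth i0 occ k).
  by field.
by rewrite invf_div.
Qed.

Lemma is_pole_occ a : is_pole d y a = polew (size occ) occ_pole a.
Proof.
apply/existsP/(polewP _ _ _) => [[i /andP[yi /eqP e]]|[k hk ->]].
  have /(nthP i0)[k hk ek] : i \in occ by rewrite mem_enum.
  exists k => //; rewrite /occ_pole ek.
  have d_neq0 := lt0r_neq0 (d_pos i).
  have ad : a * d i = -1 by apply/eqP; rewrite -addr_eq0 addrC e.
  by apply: (mulIf d_neq0); rewrite ad mulNr mulVf.
exists (nth i0 occ k); rewrite occ_occupied //=.
by rewrite /occ_pole mulNr mulVf ?(lt0r_neq0 (d_pos _)) // subrr.
Qed.

Lemma Mtot_occ : Mtot R y = mass (size occ) occ_weight.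
Proof. by rewrite /Mtot natr_sum sum_occ // => i ->. Qed.

Lemma Finf_occ Rg : Finf d y Rg = Finfw (size occ) occ_pole occ_weight Rg.
Proof.
rewrite /Finf /Finfw Mtot_occ (sum_occ (f := fun i => (y i)%:R / d i)) => [|i ->].
  by rewrite -mulrN -sumrN; congr (_ + _ * _); apply: eq_bigr => k _; rewrite mulrN.
by rewrite mul0r.
Qed.

End Reduction.

Theorem mainTheorem6 (R : realType) (N : nat) (xA xB : R)
    (dx xc : 'I_N -> R) (y : 'I_N -> nat) :
  (2 <= N)%N ->
  xA < xB ->
  (forall i, 0 < dx i) ->
  (* the bins tile [xA, xB] contiguously in increasing order *)
  (forall i : 'I_N, xc i - dx i / 2 = xA + \sum_(j < N | (j < i)%N) dx j) ->
  \sum_(j < N) dx j = xB - xA ->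
  let d := fun i => xc i - xA in
  let Rg := xB - xA in
  (2 <= nOcc y)%N ->
  Finf d y Rg != 0 ->
  exists (zs zF : seq R),
    (* zs = the singularities of F (zeros of g), listed increasingly *)
    sorted <%R zs /\ (forall a, is_sing d y a <-> a \in zs) /\
    (* F has exactly n-1 zeros, listed without repetition in zF *)
    uniq zF /\ size zF = (nOcc y).-1 /\ (forall a, is_zeroF d y Rg a <-> a \in zF) /\
    (* the open intervals between consecutive singularities are n-2 in number,
       and each contains exactly one zero of F *)
    size zs = (nOcc y).-1 /\
    (forall k : nat, (k.+1 < size zs)%N ->
       exists! a, is_zeroF d y Rg a /\ zs`_k < a < zs`_k.+1) /\
    (* the remaining zero *)
    (0 < Finf d y Rg -> exists a, is_zeroF d y Rg a /\ a < head 0 zs) /\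
    (Finf d y Rg < 0 -> exists a, is_zeroF d y Rg a /\ last 0 zs < a).
Proof.
move=> N_ge2 xA_lt_xB dx_pos tiling _ d Rg n_ge2 Finf_neq0.
have [d_pos d_inc] := tiling_offsets dx_pos tiling.
pose i0 : 'I_N := Ordinal (ltnW N_ge2).
have n_gt1 : (1 < size (occ y))%N by rewrite size_occ.
have p_inc := occ_pole_inc (y := y) i0 d_pos d_inc.
have w_pos := occ_weight_pos R i0 (y := y).
have Rg_pos : 0 < Rg by rewrite subr_gt0.
rewrite -size_occ (Finf_occ d y i0) in Finf_neq0 *.
apply: (model_zeros n_gt1 p_inc w_pos Rg_pos) Finf_neq0 => a.
  by rewrite /is_sing (is_pole_occ y i0 d_pos) (gfun_occ y i0 d_pos); apply: sing_iff.
rewrite /is_zeroF /is_sing /Ffun (is_pole_occ y i0 d_pos) (gfun_occ y i0 d_pos).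
by rewrite (Mtot_occ R y i0); apply: zero_iff.
Qed.
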